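(* Let $H=(V,E)$ be a graph, $\ell\ge1$ an integer, and let $G$ be $\ell$-suspended over $H$. Then for any two vertices $x,y\in V$ and any $i\in\{0,\dots,\ell\}$ we have $d_G((x,0),(y,i))=d_G((x,\ell),(y,\ell-i))=d_H(x,y)+i$.
   Context: $d_G$ denotes graph distance (length of a shortest path) in $G$. $P_\ell$ is the path on $0,1,\dots,\ell$ and $H\times P_\ell$ is the Cartesian product (vertex set $V\times\{0,\dots,\ell\}$, with $(x,i)\sim(y,j)$ iff ($\{x,y\}\in E$ and $i=j$) or ($x=y$ and $|i-j|=1$)). A graph $G$ is $\ell$-suspended over $H$ if $G$ is a spanning subgraph of $H\times P_\ell$ that contains all edges $\{(x,i),(x,i+1)\}$ ($x\in V$, $0\le i<\ell$) and all edges $\{(x,0),(y,0)\}$ and $\{(x,\ell),(y,\ell)\}$ for $\{x,y\}\in E$. *)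

From Stdlib Require Import ClassicalEpsilon.
From mathcomp Require Import all_boot.
Set Implicit Arguments. Unset Strict Implicit. Unset Printing Implicit Defensive.

Definition walkb (T : finType) (e : rel T) (x y : T) (n : nat) : bool :=
  [exists p : n.-tuple T, path e x p && (last x p == y)].

(* Graph distance: Some (length of a shortest walk), or None (= infinity)
   if y is unreachable from x. *)
Definition dist (T : finType) (e : rel T) (x y : T) : option nat :=
  match excluded_middle_informative (exists n, walkb e x y n) with
  | left H => Some (ex_minn H)
  | right _ => None
  end.

Definition simple_graph (T : finType) (e : rel T) : Prop :=
  symmetric e /\ irreflexive e.

Definition cartP (V : finType) (eH : rel V) (l : nat) : rel (V * 'I_l.+1) :=
  fun u v => ((u.2 == v.2) && eH u.1 v.1)
          || ((u.1 == v.1) && ((u.2.+1 == v.2 :> nat) || (v.2.+1 == u.2 :> nat))).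

Arguments cartP {V} eH l.

Definition suspended (V : finType) (eH : rel V) (l : nat)
    (eG : rel (V * 'I_l.+1)) : Prop :=
  [/\ symmetric eG,
      subrel eG (cartP eH l),
      (forall (x : V) (i j : 'I_l.+1), j = i.+1 :> nat -> eG (x, i) (x, j)),
      (forall x y : V, eH x y -> eG (x, ord0) (y, ord0)) &
      (forall x y : V, eH x y -> eG (x, ord_max) (y, ord_max))].

Arguments suspended {V} eH l eG.

(* A walk in G projects onto a walk in H: horizontal steps project to edges
   of H, vertical steps to nothing, and a walk that changes level by i uses at
   least i vertical steps.  Hence d_G((x,0),(y,i)) >= d_H(x,y) + i, and
   likewise from level l.  Conversely a shortest walk of H, run inside the
   bottom (or top) copy of H, followed by i rungs gives the matching upper
   bound; if y is unreachable from x in H, no walk in G exists either. *)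

From mathcomp Require Import all_boot.
From mathcomp Require Import zify.
From Stdlib Require Import ClassicalEpsilon.

Set Implicit Arguments.
Unset Strict Implicit.
Unset Printing Implicit Defensive.

Section Walks.
Variables (T : finType) (e : rel T).

Lemma walkbP x y n :
  reflect (exists p : seq T, [/\ size p = n, path e x p & last x p = y])
          (walkb e x y n).
Proof.
apply: (iffP existsP) => [[p /andP[ep /eqP lp]] | [p [sp ep lp]]].
  by exists p; rewrite size_tuple.
have sp' : size p == n by apply/eqP.
by exists (Tuple sp'); rewrite /= ep lp eqxx.
Qed.

Lemma walkb0 x y : walkb e x y 0 = (x == y).
Proof.
apply/walkbP/eqP => [[[|z p] [//= _ _ <-]] // | <-].
by exists [::].
Qed.

Lemma walkbS x y n : walkb e x y n.+1 = [exists z, e x z && walkb e z y n].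
Proof.
apply/walkbP/existsP => [[[|z p] [//= [sp] /andP[exz ep] lp]] | [z /andP[exz]]].
  by exists z; rewrite exz; apply/walkbP; exists p.
by case/walkbP=> p [sp ep lp]; exists (z :: p); rewrite /= exz sp.
Qed.

Lemma walkb1 x y : walkb e x y 1 = e x y.
Proof.
rewrite walkbS; apply/existsP/idP => [[z /andP[exz]] | exy].
  by rewrite walkb0 => /eqP <-.
by exists y; rewrite exy walkb0 eqxx.
Qed.

Lemma walkb_cat x y z m n :
  walkb e x y m -> walkb e y z n -> walkb e x z (m + n).
Proof.
elim: m x => [|m IH] x; first by rewrite walkb0 => /eqP ->.
rewrite walkbS => /existsP[w /andP[exw wwy]] wyz.
by rewrite addSn walkbS; apply/existsP; exists w; rewrite exw IH.
Qed.

Lemma walkb_sym x y n : symmetric e -> walkb e x y n = walkb e y x n.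
Proof.
move=> esym; suff walkb_rev u v : walkb e u v n -> walkb e v u n.
  by apply/idP/idP; apply: walkb_rev.
elim: n u => [|n IH] u; first by rewrite !walkb0 eq_sym.
rewrite walkbS => /existsP[w /andP[euw wwv]].
by rewrite -addn1; apply: walkb_cat (IH _ wwv) _; rewrite walkb1 esym.
Qed.

Variant dist_spec x y : option nat -> Prop :=
  | DistSome d of walkb e x y d & (forall n, walkb e x y n -> d <= n) :
      dist_spec x y (Some d)
  | DistNone of (forall n, ~~ walkb e x y n) : dist_spec x y None.

Lemma distP x y : dist_spec x y (dist e x y).
Proof.
rewrite /dist; case: excluded_middle_informative => [ex | nex].
  by case: ex_minnP => d wd mind; constructor.
by constructor=> n; apply/negP => wn; apply: nex; exists n.
Qed.

End Walks.

Lemma walkb_map (T S : finType) (e : rel T) (f : rel S) (g : T -> S) x y n :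
  {homo g : a b / e a b >-> f a b} -> walkb e x y n -> walkb f (g x) (g y) n.
Proof.
move=> gE; elim: n x => [|n IH] x; first by rewrite !walkb0 => /eqP ->.
rewrite !walkbS => /existsP[z /andP[exz wzy]].
by apply/existsP; exists (g z); rewrite gE // IH.
Qed.

Lemma dist_shift (T S : finType) (e : rel T) (f : rel S) x y u v k :
  (forall n, walkb e x y n -> walkb f u v (n + k)) ->
  (forall n, walkb f u v n -> exists2 m, walkb e x y m & m + k <= n) ->
  dist f u v = omap (addn^~ k) (dist e x y).
Proof.
move=> lift shadow.
case: (distP e x y) => [d wd mind | nw]; case: (distP f u v) => [d' wd' mind' | nw'] //=.
- congr Some; apply/eqP; rewrite eqn_leq mind' ?lift //.
  have [m wm le_mk] := shadow _ wd'.
  by apply: leq_trans le_mk; rewrite leq_add2r mind.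
- by case/negP: (nw' (d + k)); apply: lift.
- by have [m wm _] := shadow _ wd'; case/negP: (nw m).
Qed.

Section CartesianProduct.
Variables (V : finType) (eH : rel V) (l : nat) (eG : rel (V * 'I_l.+1)).

Lemma walkb_cartP_proj :
  subrel eG (cartP eH l) -> forall u w n, walkb eG u w n ->
  exists2 m, walkb eH u.1 w.1 m & m + (w.2 - u.2) <= n /\ m + (u.2 - w.2) <= n.
Proof.
move=> sub u [c k] n; elim: n u => [|n IH] [a i].
  by rewrite walkb0 => /eqP [] -> ->; exists 0; rewrite ?walkb0 ?subnn.
rewrite walkbS => /existsP[[b j] /andP[eab /IH /= [m wm [le1 le2]]]].
case/orP: (sub _ _ eab) => /andP[/eqP /= same step].
  exists m.+1; last by rewrite same; lia.
  by rewrite walkbS; apply/existsP; exists b; rewrite step.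
by exists m; [rewrite same | case/orP: step => /eqP; lia].
Qed.

Lemma walkb_rung :
  (forall x (i j : 'I_l.+1), j = i.+1 :> nat -> eG (x, i) (x, j)) ->
  forall y (i j : 'I_l.+1) n, j = i + n :> nat -> walkb eG (y, i) (y, j) n.
Proof.
move=> rung y i j n; elim: n j => [|n IH] j ji.
  by rewrite walkb0; apply/eqP; congr (_, _); apply: val_inj; rewrite /= ji addn0.
have lt_in : i + n < l.+1 by have := ltn_ord j; lia.
rewrite -[n.+1]addn1; apply: (walkb_cat (y := (y, Ordinal lt_in))); first exact: IH.
by rewrite walkb1 rung // ji addnS.
Qed.

End CartesianProduct.

Theorem lemma3p2 (V : finType) (eH : rel V) (l : nat) (eG : rel (V * 'I_l.+1))
  (hH : simple_graph eH) (hl : 0 < l) (hG : suspended eH l eG)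
  (x y : V) (i : 'I_l.+1) :
  dist eG (x, ord0) (y, i) = omap (addn^~ i) (dist eH x y) /\
  dist eG (x, ord_max) (y, inord (l - i)) = omap (addn^~ i) (dist eH x y).
Proof.
have le_il : i <= l by rewrite -ltnS.
have li_val : (inord (l - i) : 'I_l.+1) = l - i :> nat by rewrite inordK // ltnS leq_subr.
case: hG => Gsym Gsub rung bottom top.
have shadow := walkb_cartP_proj Gsub.
split; apply: dist_shift => n.
- move=> wH; apply: walkb_cat (walkb_map bottom wH) _.
  exact: (walkb_rung rung).
- by case/shadow=> m wm [le_mn _]; exists m; rewrite /= ?subn0 in le_mn *.
- move=> wH; apply: walkb_cat (walkb_map top wH) _.
  by rewrite walkb_sym //; apply: (walkb_rung rung); rewrite li_val subnK.
- case/shadow=> m wm [_ le_mn]; exists m => //.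
  by move: le_mn; rewrite /= li_val subKn.
Qed.
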